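(* Let $X$ be a Polish space and let $\rho:\mathcal{F}\to[\Psi]^\omega$ be a partition regular function. If $\mathcal{F}$ is an analytic subset of $[\Omega]^\omega$ and $\rho$ is a Borel function, then $\mathscr{L}_X(\rho)\subseteq\Sigma^1_1(X)$, i.e., every set in $\mathscr{L}_X(\rho)$ is an analytic subset of $X$.
   Context: Let $\Omega,\Psi$ be countably infinite sets and $\mathcal{F}\subseteq[\Omega]^\omega$ a nonempty family of infinite subsets of $\Omega$ with $A\setminus K\in\mathcal{F}$ for all $A\in\mathcal{F}$ and finite $K\subseteq\Omega$. A function $\rho:\mathcal{F}\to[\Psi]^\omega$ is partition regular if: (M) $E\subseteq F$ in $\mathcal{F}$ implies $\rho(E)\subseteq\rho(F)$; (R) for every $F\in\mathcal{F}$ and $A,B\subseteq\Psi$ with $\rho(F)=A\cup B$ there is $E\in\mathcal{F}$ with $\rho(E)\subseteq A$ or $\rho(E)\subseteq B$; (S) for every $F\in\mathcal{F}$ there is $E\subseteq F$, $E\in\mathcal{F}$, such that for every $a\in\rho(E)$ there is a finite $K\subseteq\Omega$ with $a\notin\rho(E\setminus K)$. Subsets of $\Omega$ are identified with their characteristic functions, so $2^\Omega=\{0,1\}^\Omega$ carries the product topology (discrete on $\{0,1\}$), and $[\Omega]^\omega$ (infinite subsets) is a $G_\delta$ subspace, hence Polish; likewise for $[\Psi]^\omega\subseteq2^\Psi$. For $x:\Psi\to X$, $\Lambda_x(\rho)$ is the set of $\eta\in X$ for which there is $F\in\mathcal{F}$ such that for every neighborhood $U$ of $\eta$ there is a finite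 $K\subseteq\Omega$ with $x_s\in U$ for all $s\in\rho(F\setminus K)$. $\mathscr{L}_X(\rho)=\{A\subseteq X:\exists x\in X^\Psi\ A=\Lambda_x(\rho)\}\cup\{\emptyset\}$, and $\Sigma^1_1(X)$ is the family of analytic subsets of $X$. *)

From mathcomp Require Import all_boot all_order all_algebra.
From mathcomp Require Import all_classical all_reals all_analysis.
From mathcomp Require Import Rstruct.
Set Implicit Arguments. Unset Strict Implicit. Unset Printing Implicit Defensive.
Import Order.TTheory GRing.Theory Num.Theory.
Local Open Scope classical_set_scope.
Local Open Scope ring_scope.

Notation baire_space := {ptws nat -> nat}.

(** The Cantor cube 2^A = {0,1}^A with the product topology
    (subsets of A identified with their characteristic functions). *)
Notation cube A := {ptws A -> bool}.

Definition polish (T : topologicalType) : Prop :=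
  exists d : T -> T -> Rdefinitions.R,
    [/\
        [/\ (forall x y, 0 <= d x y),
             (forall x y, d x y = 0 <-> x = y),
             (forall x y, d x y = d y x) &
             (forall x y z, d x z <= d x y + d y z)],
        (forall U : set T, open U <->
           (forall x, U x -> exists2 e, 0 < e & forall y, d x y < e -> U y)),
        (forall u : nat -> T,
           (forall e, 0 < e -> exists N, forall m n, (N <= m)%N -> (N <= n)%N ->
               d (u m) (u n) < e) ->
           exists l, forall e, 0 < e -> exists N, forall n, (N <= n)%N ->
               d (u n) l < e)
      & exists D : set T, countable D /\ closure D = setT].

Definition analytic (T : topologicalType) (A : set T) : Prop :=
  A = set0 \/ exists f : baire_space -> T, continuous f /\ range f = A.

Definition borel_set (T : topologicalType) : set (set T) :=
  smallest (sigma_algebra setT) open.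

(** [A]^omega : infinite subsets of A (as characteristic functions). *)
Definition infsets (A : Type) : set (cube A) :=
  [set S | infinite_set [set a | S a]].
Arguments infsets A : clear implicits.

Definition setminus_fin (A : eqType) (S : cube A) (K : seq A) : cube A :=
  fun a => S a && (a \notin K).

Definition subfun (A : Type) (S T : cube A) : Prop := forall a, S a -> T a.

Definition partition_regular (Omega Psi : countType) (calF : set (cube Omega))
    (rho : cube Omega -> cube Psi) : Prop :=
  [/\ (forall E F, calF E -> calF F -> subfun E F -> subfun (rho E) (rho F)),
      (forall F (A B : set Psi), calF F ->
          (forall s, rho F s <-> A s \/ B s) ->
          exists2 E, calF E &
            (forall s, rho E s -> A s) \/ (forall s, rho E s -> B s))
    & (forall F, calF F -> exists E, [/\ subfun E F, calF E &
          forall a, rho E a -> exists K : seq Omega, ~~ rho (setminus_fin E K) a])].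

Definition Lambda (Omega Psi : countType) (X : topologicalType)
    (calF : set (cube Omega)) (rho : cube Omega -> cube Psi) (x : Psi -> X) : set X :=
  [set eta | exists2 F, calF F &
     forall U, nbhs eta U -> exists K : seq Omega,
       forall s, rho (setminus_fin F K) s -> U (x s)].

Definition scrL (Omega Psi : countType) (X : topologicalType)
    (calF : set (cube Omega)) (rho : cube Omega -> cube Psi) : set (set X) :=
  [set A | (exists x : Psi -> X, A = Lambda calF rho x) \/ A = set0].

From mathcomp Require Import all_boot all_order all_algebra.
From mathcomp Require Import all_classical all_reals all_analysis.
From mathcomp Require Import lra Rstruct.
Set Implicit Arguments. Unset Strict Implicit. Unset Printing Implicit Defensive.
Import Order.TTheory GRing.Theory Num.Theory.
Local Open Scope classical_set_scope.

(* Let d be a complete metric on X and u a dense sequence. Correcting any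
   q : nat -> nat into a 2^-k-Cauchy sequence of points u (q k) and taking its
   limit gives a continuous surjection from Baire space onto X; composing with
   a continuous surjection g onto calF, a point z of Baire space codes a pair
   (F, eta). The codes for which, at each precision k, all x_s with s in
   rho(F \ K) are 2^-k-close to the k-th approximant of eta for some finite K
   form an analytic set: the condition on z is a countable Boolean combination
   of open sets and of preimages of Borel sets under continuous maps, since rho
   is Borel. Lambda_x(rho) is the continuous image of this set of codes. The
   closure properties of analytic sets used here all reduce to the fact that a
   nonempty closed subset of Baire space is a continuous retract of it. *)

Lemma ptws_cvg (I : Type) (T : topologicalType) (F : set_system {ptws I -> T})
    (f : {ptws I -> T}) :
  Filter F -> (forall i, (fun g : {ptws I -> T} => g i) @ F --> f i) -> F --> f.
Proof.
move=> FF Fi; apply/cvg_sup => i; apply/cvg_image.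
  by rewrite eqEsubset; split => // t _; exists (fun _ => t).
move=> V /Fi FV; exists ((fun g : {ptws I -> T} => g i) @^-1` V) => //.
by rewrite eqEsubset; split => [t [g /= Vg <-] //|t Vt]; exists (fun _ => t).
Qed.

Lemma ptws_continuous (S : topologicalType) (I : Type) (T : topologicalType)
    (h : S -> {ptws I -> T}) :
  (forall i, continuous (fun s => h s i)) -> continuous h.
Proof. by move=> hc s; apply: ptws_cvg => i; apply: hc. Qed.

Lemma near_coord (I : eqType) (T : discreteTopologicalType) (z : {ptws I -> T})
    (i : I) :
  \forall w \near z, w i = z i.
Proof. exact: (@proj_continuous I (fun=> T) i z _ (discrete_set1 (z i))). Qed.

Lemma setminus_fin_continuous (A : eqType) (K : seq A) :
  continuous (fun S : cube A => setminus_fin S K).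
Proof.
apply: ptws_continuous => a S; apply/discrete_cvg.
by apply: filterS (near_coord S a) => S' /= S'a; rewrite /setminus_fin S'a.
Qed.

Lemma closed_eq_continuous (S T : topologicalType) (f g : S -> T) :
  hausdorff_space T -> continuous f -> continuous g -> closed [set x | f x = g x].
Proof.
move=> hT cf cg x clx; apply: hT => A B /(cf x) fA /(cg x) gB.
have [w [/= fgw [Afw Bgw]]] :=
  clx _ (filterI (fA : nbhs x (f @^-1` A)) (gB : nbhs x (g @^-1` B))).
by exists (f w); split; rewrite // fgw.
Qed.

Lemma closed_subcube (A : eqType) (W : set A) :
  closed [set G : cube A | forall s, G s -> W s].
Proof.
move=> G clG s Gs; have [G' [G'W /= G's]] := clG _ (near_coord G s).
by apply: G'W; rewrite G's.
Qed.

Lemma borel_set_closed (T : topologicalType) (C : set T) : closed C -> borel_set C.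
Proof.
move=> clC; have [_ borelD _] := smallest_sigma_algebra setT (@open T).
rewrite -[C]setCK -setTD; apply: borelD; apply: sub_gen_smallest.
exact: closed_openC.
Qed.

(** * Baire space *)

Definition cylinder (z : baire_space) (N : nat) : set baire_space :=
  [set w | forall i, (i < N)%N -> w i = z i].

Lemma cylinder_le z M N : (M <= N)%N -> cylinder z N `<=` cylinder z M.
Proof. by move=> MN w wz i iM; apply: wz; apply: leq_trans MN. Qed.

Lemma cylinder_eq z w N : cylinder z N w -> cylinder w N = cylinder z N.
Proof. by move=> wz; apply/seteqP; split => v vz i iN; rewrite vz // wz. Qed.

Lemma cylinder_nbhs z N : nbhs z (cylinder z N).
Proof.
elim: N => [|N IH]; first by apply: filterS filterT => w _ i.
apply: filterS (filterI IH (near_coord z N)) => w [wz wN] i.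
by rewrite ltnS leq_eqVlt => /predU1P[->|/wz].
Qed.

Lemma nbhs_cylinderP z U : nbhs z U -> exists N, cylinder z N `<=` U.
Proof.
pose G := filter_from [set: nat] (cylinder z).
have G_filter : Filter G.
  apply: filter_from_filter; first by exists 0%N.
  move=> M N _ _; exists (maxn M N) => // w wz.
  by split; apply: cylinder_le wz; rewrite ?leq_maxl ?leq_maxr.
have /(_ U) Gz : G --> (z : baire_space).
  apply: ptws_cvg => i; apply/discrete_cvg.
  by exists i.+1 => // w; apply.
by move=> /Gz[N _ zNU]; exists N.
Qed.

Lemma baire_continuous (S : topologicalType) (h : S -> baire_space) :
  (forall i s, \forall w \near s, h w i = h s i) -> continuous h.
Proof. by move=> hloc; apply: ptws_continuous => i s; apply/discrete_cvg/hloc. Qed.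

Lemma baire_hausdorff : hausdorff_space baire_space.
Proof. by apply: hausdorff_product => _; apply: discrete_hausdorff. Qed.

Definition btail (p : baire_space) : baire_space := fun i => p i.+1.

Definition bcons (n : nat) (p : baire_space) : baire_space :=
  fun i => if i is i'.+1 then p i' else n.

Definition bcat (s : seq nat) (p : baire_space) : baire_space :=
  fun i => if (i < size s)%N then nth 0%N s i else p (i - size s)%N.

Definition bcol (n : nat) (w : baire_space) : baire_space :=
  fun m => w (pickle (n, m)).

Definition bjoin (q : nat -> baire_space) : baire_space :=
  fun i => if unpickle i is Some (n, m) then q n m else 0%N.

Lemma bcolK q n : bcol n (bjoin q) = q n.
Proof. by apply: funext => m; rewrite /bcol /bjoin pickleK. Qed.

Lemma btail_continuous : continuous btail.
Proof. by apply: baire_continuous => i s; apply: near_coord. Qed.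

Lemma bcat_continuous s : continuous (bcat s).
Proof.
apply: baire_continuous => i p; rewrite /bcat; case: ifP => _.
  exact: filterS filterT.
exact: near_coord.
Qed.

Lemma bcol_continuous n : continuous (bcol n).
Proof. by apply: baire_continuous => i s; apply: near_coord. Qed.

(** * Analytic sets *)

Lemma analytic_image (T U : topologicalType) (f : T -> U) (A : set T) :
  continuous f -> analytic A -> analytic (f @` A).
Proof.
move=> cf [->|[h [ch <-]]]; first by left; rewrite image_set0.
right; exists (f \o h); split; last by rewrite image_comp.
by move=> p; apply: continuous_comp; [exact: ch | exact: cf].
Qed.

Lemma analytic_bigcup (T : topologicalType) (I : countType) (D : set I)
    (A : I -> set T) :
  (forall i, D i -> analytic (A i)) -> analytic (\bigcup_(i in D) A i).
Proof.
move=> anA; rewrite bigcup_mkcond.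
set B := fun i => if i \in D then A i else set0.
have anB i : analytic (B i) by rewrite /B; case: ifPn => [/set_mem/anA|_]; [|left].
have [B0|/existsNP[i0 /eqP/set0P nzB]] := pselect (forall i, B i = set0).
  by left; apply: bigcup0 => i _; apply: B0.
have [f0 [cf0 f0B]] : exists f : baire_space -> T, continuous f /\ range f = B i0.
  by case: (anB i0) => // B0; move: nzB; rewrite B0 => -[].
have /choice[f fB] : forall i, exists f : baire_space -> T,
    [/\ continuous f, range f `<=` \bigcup_i B i & B i `<=` range f].
  move=> i; case: (anB i) => [->|[f [cf fB]]].
    by exists f0; split => // _ [p _ <-]; exists i0 => //; rewrite -f0B; exists p.
  exists f; split => //; last by rewrite fB.
  by move=> _ [p _ <-]; exists i => //; rewrite -fB; exists p.
pose decode n := odflt i0 (unpickle n).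
right; exists (fun p => f (decode (p 0%N)) (btail p)); split.
  move=> p U /= pU; have [cfp _ _] := fB (decode (p 0%N)).
  have near_fp : nbhs p ((f (decode (p 0%N)) \o btail) @^-1` U).
    exact: (continuous_comp (@btail_continuous p) (cfp (btail p))) U pU.
  by apply: filterS (filterI near_fp (near_coord p 0%N)) => w [/= Uw ->].
apply/seteqP; split => [_ [p _ <-]|t [i _ Bit]].
  by have [_ fU _] := fB (decode (p 0%N)); apply: fU; exists (btail p).
have [_ _ /(_ t Bit)[q _ <-]] := fB i.
by exists (bcons (pickle i) q) => //; rewrite /= /decode pickleK.
Qed.

Section closed_retraction.
Variables (C : set baire_space) (p0 : baire_space).
Hypotheses (closedC : closed C) (Cp0 : C p0).

Definition cylinder_meets p N := C `&` cylinder p N !=set0.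

Let meets_le p M N : (M <= N)%N -> cylinder_meets p N -> cylinder_meets p M.
Proof. by move=> MN [w [Cw wp]]; exists w; split => //; apply: cylinder_le wp. Qed.

Let meets_cylinder p w N : cylinder p N w -> cylinder_meets w N = cylinder_meets p N.
Proof. by move=> wp; rewrite /cylinder_meets (cylinder_eq wp). Qed.

Let exit_ex p : ~ C p -> exists N, cylinder_meets p N /\ ~ cylinder_meets p N.+1.
Proof.
move=> Cp; apply: contra_notP Cp => noexit.
have meets_all N : cylinder_meets p N.
  elim: N => [|N IH]; first by exists p0; split => // w.
  by apply: contrapT => nmeets; apply: noexit; exists N.
apply: closedC => B /nbhs_cylinderP[N pNB].
by have [w [Cw wp]] := meets_all N; exists w; split => //; apply: pNB.
Qed.

(* For p outside C, the length of the longest initial segment of p whose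
   cylinder meets C; the retraction sends p to a point of C sharing it. *)
Definition exit_level p :=
  xget 0%N [set N | cylinder_meets p N /\ ~ cylinder_meets p N.+1].

Let meets_exit p N : ~ C p -> cylinder_meets p N <-> (N <= exit_level p)%N.
Proof.
move=> /exit_ex/(xgetPex 0%N)[pexit pexit1].
split => [pN|]; last by move/meets_le; apply.
by rewrite leqNgt; apply/negP => /meets_le/(_ pN)/pexit1.
Qed.

Definition closed_retract p :=
  if pselect (C p) then p else xget p0 (C `&` cylinder p (exit_level p)).

Let retract_in p : C p -> closed_retract p = p.
Proof. by move=> Cp; rewrite /closed_retract; case: pselect. Qed.

Let retract_notin p :
  ~ C p -> closed_retract p = xget p0 (C `&` cylinder p (exit_level p)).
Proof. by move=> Cp; rewrite /closed_retract; case: pselect. Qed.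

Let retract_notinP p : ~ C p -> (C `&` cylinder p (exit_level p)) (closed_retract p).
Proof.
move=> Cp; rewrite retract_notin //; apply: xgetPex.
by have [w pw] := (meets_exit _ Cp).2 (leqnn (exit_level p)); exists w.
Qed.

Let retract_continuous : continuous closed_retract.
Proof.
apply: baire_continuous => i s; have [Cs|Cs] := pselect (C s).
- rewrite retract_in //; apply: filterS (cylinder_nbhs s i.+1) => w ws.
  have [Cw|Cw] := pselect (C w); first by rewrite retract_in // ws.
  have iw : (i.+1 <= exit_level w)%N.
    by apply/(meets_exit _ Cw); rewrite (meets_cylinder ws); exists s.
  have [_ rw] := retract_notinP Cw.
  by rewrite rw ?ws //; apply: leq_trans iw.
- set N := exit_level s; apply: filterS (cylinder_nbhs s N.+1) => w ws.
  have wsN : cylinder s N w by apply: cylinder_le ws.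
  have Cw : ~ C w.
    move=> Cw; suff : (N.+1 <= N)%N by rewrite ltnn.
    by apply/(meets_exit _ Cs); exists w.
  have exit_w : exit_level w = N.
    apply/anti_leq/andP; split; last first.
      apply/(meets_exit _ Cw); rewrite (meets_cylinder wsN).
      exact/(meets_exit _ Cs).
    rewrite leqNgt; apply/negP => /(meets_exit _ Cw).
    by rewrite (meets_cylinder ws) => /(meets_exit _ Cs); rewrite ltnn.
  by rewrite !retract_notin // exit_w (cylinder_eq wsN).
Qed.

Lemma analytic_closed_retract : analytic C.
Proof.
right; exists closed_retract; split; first exact: retract_continuous.
apply/seteqP; split => [_ [p _ <-]|p Cp]; last by exists p; rewrite ?retract_in.
by have [Cp|/retract_notinP[]//] := pselect (C p); rewrite retract_in.
Qed.

End closed_retraction.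

Lemma analytic_closed_baire (C : set baire_space) : closed C -> analytic C.
Proof.
move=> clC; have [->|/set0P[p0 Cp0]] := eqVneq C set0; first by left.
exact: analytic_closed_retract clC Cp0.
Qed.

Lemma analytic_bigcap (T : topologicalType) (A : nat -> set T) :
  hausdorff_space T -> (forall n, analytic (A n)) -> analytic (\bigcap_n A n).
Proof.
move=> hT anA; have [[n An0]|/forallNP nzA] := pselect (exists n, A n = set0).
  by left; apply/seteqP; split => // t /(_ n I); rewrite An0.
have /choice[f fA] : forall n, exists f : baire_space -> T,
    continuous f /\ range f = A n.
  by move=> n; case: (anA n) => // /nzA.
pose Z := \bigcap_n [set w | f n (bcol n w) = f 0%N (bcol 0 w)].
have -> : \bigcap_n A n = (f 0%N \o bcol 0) @` Z.
  apply/seteqP; split => [t At|_ [w Zw <-] n _]; last first.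
    by rewrite -(fA n).2 /= -(Zw n I); exists (bcol n w).
  have /choice[q fq] : forall n, exists q, f n q = t.
    move=> n; have [q _ <-] : range (f n) t by rewrite (fA n).2; exact: At.
    by exists q.
  exists (bjoin q); last by rewrite /= bcolK fq.
  by move=> n _; rewrite /= !bcolK !fq.
have cf n : continuous (f n \o bcol n).
  by move=> w; apply: continuous_comp; [exact: bcol_continuous | exact: (fA n).1].
apply: analytic_image (cf 0%N) _; apply: analytic_closed_baire.
by apply: closed_bigI => n _; apply: closed_eq_continuous; [|exact: cf..].
Qed.

Lemma analytic_setI (T : topologicalType) (A B : set T) :
  hausdorff_space T -> analytic A -> analytic B -> analytic (A `&` B).
Proof.
move=> hT anA anB.
have -> : A `&` B = \bigcap_n (if n is 0 then A else B).
  apply/seteqP; split => [t [At Bt] [|n]//|t AB].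
  by split; [apply: (AB 0%N) | apply: (AB 1%N)].
by apply: analytic_bigcap => // -[|n].
Qed.

Lemma analytic_open_baire (U : set baire_space) : open U -> analytic U.
Proof.
move=> oU.
have -> : U = \bigcup_(s in [set s | range (bcat s) `<=` U]) range (bcat s).
  apply/seteqP; split => [z Uz|z [s sU /sU]//].
  have [N zNU] : exists N, cylinder z N `<=` U.
    by apply: nbhs_cylinderP; move: oU; rewrite openE; apply.
  have bcat_cylinder : range (bcat (mkseq z N)) `<=` cylinder z N.
    by move=> _ [p _ <-] i iN; rewrite /bcat size_mkseq iN nth_mkseq.
  exists (mkseq z N); first exact: subset_trans zNU.
  exists (fun i => z (i + N)%N) => //; apply: funext => i.
  rewrite /bcat size_mkseq; case: ltnP => iN; first by rewrite nth_mkseq.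
  by rewrite subnK.
apply: analytic_bigcup => s _; right; exists (bcat s); split => //.
exact: bcat_continuous.
Qed.

Lemma analytic_preimage_borel (Y : topologicalType) (h : baire_space -> Y)
    (C : set Y) :
  continuous h -> borel_set C -> analytic (h @^-1` C).
Proof.
move=> ch borelC.
(* Recording ~` C as well makes the class closed under complements. *)
pose E := [set C : set Y | analytic (h @^-1` C) /\ analytic (h @^-1` (~` C))].
suff : E C by case.
apply: (smallest_sub (G := open) (C := sigma_algebra setT)) => //; last first.
  move=> A oA; have oA' : open (h @^-1` A) by move/continuousP: ch; apply.
  split; first exact: analytic_open_baire.
  by rewrite preimage_setC; apply: analytic_closed_baire; exact: open_closedC.
split.
- split; first by left; rewrite preimage_set0.
  by rewrite setC0 preimage_setT; apply: analytic_open_baire; exact: openT.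
- by move=> A [anA anCA]; rewrite /E /= setTD setCK.
- move=> F anF; split.
    by rewrite preimage_bigcup; apply: analytic_bigcup => n _; case: (anF n).
  rewrite setC_bigcup preimage_bigcap.
  by apply: analytic_bigcap => [|n]; [exact: baire_hausdorff | case: (anF n)].
Qed.

(** * Polish spaces as continuous images of Baire space *)

Local Open Scope ring_scope.
Local Notation R := Rdefinitions.R.

Definition inv2exp (n : nat) : R := 1 / 2 ^+ n.

Lemma inv2exp_gt0 n : 0 < inv2exp n.
Proof. by rewrite divr_gt0 // exprn_gt0. Qed.

Lemma inv2expS n : inv2exp n = 2 * inv2exp n.+1.
Proof. by rewrite /inv2exp exprS !mul1r invfM mulrA mulfV ?mul1r. Qed.

Lemma inv2exp_le m n : (m <= n)%N -> inv2exp n <= inv2exp m.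
Proof.
move=> /subnKC <-; elim: (n - m)%N => [|k IH]; first by rewrite addn0.
rewrite addnS; apply: le_trans IH; rewrite (inv2expS (m + k)).
by have := inv2exp_gt0 (m + k).+1; lra.
Qed.

Lemma inv2exp_small e : 0 < e -> exists n, inv2exp n < e.
Proof.
move=> e0; have [N _ hN] := near_infty_natSinv_expn_lt (PosNum e0).
by exists N; apply: hN => /=.
Qed.

Lemma le0_of_le_inv2exp (a : R) : (forall n, a <= inv2exp n) -> a <= 0.
Proof.
move=> a_le; apply/ler_addgt0Pr => e e0; rewrite add0r.
by have [n ne] := inv2exp_small e0; apply: le_trans (ltW ne).
Qed.

Section polish_approximation.
Variables (X : topologicalType) (d : X -> X -> R).
Hypothesis d_ge0 : forall x y, 0 <= d x y.
Hypothesis d_eq0 : forall x y, d x y = 0 <-> x = y.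
Hypothesis d_sym : forall x y, d x y = d y x.
Hypothesis d_triangle : forall x y z, d x z <= d x y + d y z.
Hypothesis d_open : forall U : set X, open U <->
  (forall x, U x -> exists2 e, 0 < e & forall y, d x y < e -> U y).

Let d_refl x : d x x = 0. Proof. exact/d_eq0. Qed.

Lemma nbhs_ball x e : 0 < e -> nbhs x [set y | d x y < e].
Proof.
move=> e0; apply: open_nbhs_nbhs; split; last by rewrite /= d_refl.
apply/d_open => y /= xy; exists (e - d x y); first by lra.
by move=> z yz; have := d_triangle x y z; lra.
Qed.

Lemma nbhs_ballP x U : nbhs x U -> exists2 e, 0 < e & forall y, d x y < e -> U y.
Proof.
rewrite nbhsE => -[B [oB Bx] BU].
by have [e e0 xe] := (d_open B).1 oB x Bx; exists e => // y /xe /BU.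
Qed.

Lemma separable_dense_seq (D : set X) (x0 : X) : countable D -> closure D = setT ->
  exists u : nat -> X, forall y e, 0 < e -> exists n, d (u n) y < e.
Proof.
move=> /countable_injP[code code_inj] clD.
pose u n := xget x0 [set y | D y /\ code y = n].
exists u => y e e0.
have [z [Dz yz]] : D `&` [set z | d y z < e] !=set0.
  have : closure D y by rewrite clD.
  by apply; apply: nbhs_ball.
exists (code z); have [Du uz] : [set y | D y /\ code y = code z] (u (code z)).
  by apply: xgetPex; exists z.
by rewrite (code_inj _ _ _ _ uz) ?in_setE // d_sym.
Qed.

Section cauchy_approximation.
Hypothesis d_complete : forall v : nat -> X,
  (forall e, 0 < e -> exists N, forall m n, (N <= m)%N -> (N <= n)%N ->
     d (v m) (v n) < e) ->
  exists l, forall e, 0 < e -> exists N, forall n, (N <= n)%N -> d (v n) l < e.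
Variables (u : nat -> X) (x0 : X).

(* q k is kept only when it lies within 2^-k of the previously kept point, so
   [approx q] is always Cauchy, and [approx q = u \o q] when q converges fast. *)
Fixpoint cauchy_index (q : nat -> nat) (k : nat) : nat :=
  if k is k'.+1 then
    if d (u (cauchy_index q k')) (u (q k)) < inv2exp k then q k
    else cauchy_index q k'
  else q 0%N.

Definition approx q k := u (cauchy_index q k).

Lemma approx_step q k : d (approx q k) (approx q k.+1) <= inv2exp k.+1.
Proof.
rewrite /approx /=; case: ifP => [/ltW //|_].
by rewrite d_refl; apply/ltW/inv2exp_gt0.
Qed.

Lemma approx_cauchy q k n :
  d (approx q k) (approx q (k + n)) <= inv2exp k - inv2exp (k + n).
Proof.
elim: n => [|n IH]; first by rewrite addn0 d_refl subrr.
rewrite addnS; apply: le_trans (d_triangle _ (approx q (k + n)) _) _.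
by have := approx_step q (k + n); have := inv2expS (k + n); lra.
Qed.

Lemma approx_lt q k m : (k <= m)%N -> d (approx q k) (approx q m) < inv2exp k.
Proof.
move=> /subnKC <-; apply: le_lt_trans (approx_cauchy q k (m - k)) _.
by have := inv2exp_gt0 (k + (m - k)); lra.
Qed.

Lemma near_cauchy_index (q : baire_space) k :
  \forall w \near q, cauchy_index w k = cauchy_index q k.
Proof.
apply: filterS (cylinder_nbhs q k.+1) => w; elim: k => [|k IH] wq /=.
  exact: wq.
by rewrite IH ?wq //; apply: cylinder_le wq.
Qed.

Lemma cauchy_index_id q :
  (forall k, d (u (q k)) (u (q k.+1)) < inv2exp k.+1) -> cauchy_index q =1 q.
Proof. by move=> q_fast; elim => [|k IH] //=; rewrite IH q_fast. Qed.

Definition approx_lim (q : baire_space) := xget x0 [set l | forall e, 0 < e ->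
  exists N, forall n, (N <= n)%N -> d (approx q n) l < e].

Lemma dist_approx_lim q k : d (approx q k) (approx_lim q) <= inv2exp k.
Proof.
have : exists l, forall e, 0 < e -> exists N, forall n, (N <= n)%N ->
    d (approx q n) l < e.
  apply: d_complete => e e0; have [N Ne] := inv2exp_small e0; exists N => m n Nm Nn.
  wlog mn : m n Nm Nn / (m <= n)%N.
    move=> wlog_mn; have [|nm] := leqP m n; first exact: wlog_mn.
    by rewrite d_sym; apply: wlog_mn => //; apply: ltnW.
  exact: lt_trans (approx_lt q mn) (le_lt_trans (inv2exp_le Nm) Ne).
move=> /(xgetPex x0) lim_q; apply/ler_addgt0Pr => e e0.
have [N Ne] := lim_q e e0; set n := maxn N k.
have := Ne n (leq_maxl _ _); have := approx_lt q (leq_maxr N k).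
by have := d_triangle (approx q k) (approx q n) (approx_lim q); lra.
Qed.

Lemma approx_lim_continuous : continuous approx_lim.
Proof.
move=> q U /nbhs_ballP[e e0 qU].
have [k ke] : exists k, inv2exp k < e / 2 by apply: inv2exp_small; lra.
apply: filterS (near_cauchy_index q k) => w wq; apply: qU.
have := dist_approx_lim q k; have := dist_approx_lim w k; rewrite /approx wq.
have := d_triangle (approx_lim q) (approx q k) (approx_lim w).
by have := d_sym (approx_lim q) (approx q k); rewrite /approx; lra.
Qed.

Lemma approx_lim_eq q y :
  (forall k, d (approx q k) y <= inv2exp k) -> approx_lim q = y.
Proof.
move=> qy; apply/d_eq0/le_anti; rewrite d_ge0 andbT; apply: le0_of_le_inv2exp => k.
have := d_triangle (approx_lim q) (approx q k.+1) y; have := qy k.+1.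
have := dist_approx_lim q k.+1; have := inv2expS k.
by have := d_sym (approx_lim q) (approx q k.+1); lra.
Qed.

Hypothesis u_dense : forall y e, 0 < e -> exists n, d (u n) y < e.

Lemma approx_lim_onto y :
  exists q, approx_lim q = y /\ forall k, d (approx q k) y < inv2exp k.
Proof.
have /choice[q qy] : forall k, exists n, d (u n) y < inv2exp k.+2.
  by move=> k; apply: u_dense; apply: inv2exp_gt0.
have approxE : approx q =1 u \o q.
  move=> k; rewrite /approx cauchy_index_id // => {}k.
  apply: le_lt_trans (d_triangle _ y _) _.
  have := qy k; have := qy k.+1; have := inv2expS k.+1; have := inv2expS k.+2.
  by have := inv2exp_gt0 k.+3; have := d_sym y (u (q k.+1)); lra.
have q_lt k : d (approx q k) y < inv2exp k.
  by rewrite approxE; apply: lt_le_trans (qy k) (inv2exp_le (ltnW (leqnSn _))).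
by exists q; split => // ; apply: approx_lim_eq => k; apply/ltW.
Qed.

(** * The sets Lambda_x(rho) *)

Section Lambda_analytic.
Variables (Omega Psi : countType) (calF : set (cube Omega)).
Variables (rho : cube Omega -> cube Psi) (x : Psi -> X).
Hypothesis calF_setminus : forall A (K : seq Omega), calF A -> calF (setminus_fin A K).
Hypothesis rho_infsets : forall F, calF F -> infsets Psi (rho F).
Hypothesis rho_borel : forall B : set (cube Psi), borel_set B ->
  exists2 C : set (cube Omega), borel_set C &
    calF `&` (rho @^-1` (B `&` infsets Psi)) = calF `&` C.
Variable g : baire_space -> cube Omega.
Hypotheses (g_continuous : continuous g) (g_range : range g = calF).

Let trim (K : seq Omega) (z : baire_space) := setminus_fin (g (bcol 0 z)) K.

Let trim_continuous K : continuous (trim K).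
Proof.
have gcol : continuous (g \o bcol 0).
  by move=> z; apply: continuous_comp; [exact: bcol_continuous | exact: g_continuous].
move=> z; exact: continuous_comp (gcol z) (@setminus_fin_continuous _ K (g (bcol 0 z))).
Qed.

Let calF_trim K z : calF (trim K z).
Proof. by apply: calF_setminus; rewrite -g_range; exists (bcol 0 z). Qed.

Let analytic_rho_trim K (W : set Psi) :
  analytic [set z | forall s, rho (trim K z) s -> W s].
Proof.
have [C borelC rhoC] := rho_borel (borel_set_closed (@closed_subcube _ W)).
have -> : [set z | forall s, rho (trim K z) s -> W s] = trim K @^-1` C.
  apply/seteqP; split => z zW.
  - suff : (calF `&` rho @^-1`
        ([set G : cube Psi | forall s, G s -> W s] `&` infsets Psi)) (trim K z).
      by rewrite rhoC => -[].
    by split; [exact: calF_trim | split => //; exact/rho_infsets/calF_trim].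
  - have : (calF `&` C) (trim K z) by split => //; exact: calF_trim.
    by rewrite -rhoC => -[_ []].
by apply: analytic_preimage_borel borelC; apply: trim_continuous.
Qed.

(* z codes F = g (bcol 0 z) and the point approx_lim (bcol 1 z). *)
Definition Lambda_code : set baire_space := [set z | forall k, exists K, forall s,
  rho (trim K z) s -> d (approx (bcol 1 z) k) (x s) < 2 * inv2exp k].

Lemma analytic_Lambda_code : analytic Lambda_code.
Proof.
have -> : Lambda_code = \bigcap_k \bigcup_(Kj in [set: seq Omega * nat])
    ([set z | cauchy_index (bcol 1 z) k = Kj.2] `&`
     [set z | forall s, rho (trim Kj.1 z) s -> d (u Kj.2) (x s) < 2 * inv2exp k]).
  apply/seteqP; split => [z zL k _|z zL k].
    by have [K zK] := zL k; exists (K, cauchy_index (bcol 1 z) k).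
  by have [[K j] _ [/= zj zK]] := zL k I; exists K; rewrite /approx zj.
apply: analytic_bigcap => [|k]; first exact: baire_hausdorff.
apply: analytic_bigcup => -[K j] _.
apply: analytic_setI; [exact: baire_hausdorff | | exact: analytic_rho_trim].
apply: analytic_open_baire; rewrite openE => z /= zj.
have near_z : nbhs z (bcol 1 @^-1`
    [set w | cauchy_index w k = cauchy_index (bcol 1 z) k]).
  exact: (@bcol_continuous 1 z) _ (near_cauchy_index (bcol 1 z) k).
by apply: filterS near_z => w /=; rewrite zj.
Qed.

Lemma Lambda_code_image :
  Lambda calF rho x = (approx_lim \o bcol 1) @` Lambda_code.
Proof.
apply/seteqP; split => [y [F calF_F Fy]|_ [z zL <-]].
- have [p _ gp] : range g F by rewrite g_range.
  have [q [qy q_lt]] := approx_lim_onto y.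
  exists (bjoin (fun n => if n is 0 then p else q)); last by rewrite /= bcolK.
  move=> k; have [K FK] := Fy _ (nbhs_ball y (inv2exp_gt0 k)).
  exists K => s; rewrite /trim !bcolK /= gp => /FK /= ys.
  by apply: le_lt_trans (d_triangle _ y _) _; have := q_lt k; lra.
- exists (g (bcol 0 z)); first by rewrite -g_range; exists (bcol 0 z).
  move=> U /nbhs_ballP[e e0 eU].
  have [k ke] : exists k, inv2exp k < e / 3 by apply: inv2exp_small; lra.
  have [K zK] := zL k; exists K => s /zK xs; apply: eU => /=.
  have := dist_approx_lim (bcol 1 z) k.
  have := d_triangle (approx_lim (bcol 1 z)) (approx (bcol 1 z) k) (x s).
  have := d_sym (approx_lim (bcol 1 z)) (approx (bcol 1 z) k).
  by have := inv2exp_gt0 k; lra.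
Qed.

Lemma analytic_Lambda : analytic (Lambda calF rho x).
Proof.
rewrite Lambda_code_image; apply: analytic_image analytic_Lambda_code.
move=> z; apply: continuous_comp; first exact: bcol_continuous.
exact: approx_lim_continuous.
Qed.

End Lambda_analytic.
End cauchy_approximation.
End polish_approximation.

Theorem proposition4p1 (Omega Psi : countType) (X : topologicalType)
    (calF : set (cube Omega)) (rho : cube Omega -> cube Psi) :
  infinite_set [set: Omega] ->
  infinite_set [set: Psi] ->
  polish X ->
  (* standing assumptions on calF *)
  calF !=set0 ->
  calF `<=` infsets Omega ->
  (forall A (K : seq Omega), calF A -> calF (setminus_fin A K)) ->
  (* rho : calF -> [Psi]^omega, partition regular *)
  (forall F, calF F -> infsets Psi (rho F)) ->
  partition_regular calF rho ->
  (* calF analytic (as a subset of [Omega]^omega) *)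
  analytic calF ->
  (* rho Borel, as a map from the subspace calF to the subspace [Psi]^omega *)
  (forall B : set (cube Psi), borel_set B ->
     exists2 C : set (cube Omega), borel_set C &
       calF `&` (rho @^-1` (B `&` infsets Psi)) = calF `&` C) ->
  forall A : set X, scrL calF rho A -> analytic A.
Proof.
move=> _ _ [d [[d_ge0 d_eq0 d_sym d_triangle] d_open d_complete [D [cD clD]]]].
move=> nzF _ calF_setminus rho_infsets _ anF rho_borel A [[x ->]|->]; last by left.
have [->|/set0P[x0 _]] := eqVneq (Lambda calF rho x) set0; first by left.
have [u u_dense] := separable_dense_seq d_eq0 d_sym d_triangle d_open x0 cD clD.
have [g [g_continuous g_range]] :
    exists g : baire_space -> cube Omega, continuous g /\ range g = calF.
  by case: anF => // F0; case: nzF => F; rewrite F0.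
exact: (analytic_Lambda d_ge0 d_eq0 d_sym d_triangle d_open d_complete x0
  u_dense x calF_setminus rho_infsets rho_borel g_continuous g_range).
Qed.
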